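(* Assume the setup and let $g\in\mathfrak{R}(R)$ be a root type element over a commutative ring $R$. Then: (1) $g_{\lambda,\mu}=0$ for all $\lambda,\mu\in\Lambda$ with $d(\lambda,\mu)\ge2$; (2) $g_{\lambda,\mu}=\pm g_{\rho,\tau}$ for all $\lambda,\mu,\rho,\tau\in\Lambda$ with $d(\lambda,\mu)=d(\rho,\tau)=1$ and $\lambda-\mu=\rho-\tau$ (the sign depending only on the weights).
   Context: Setup. Exactly one of the following cases (Bourbaki numbering): (a) $\Phi=D_l$, $l\ge5$, $V$ the half-spin representation with highest weight $\varpi_l$; (b) $\Phi=E_6$, $V$ with highest weight $\varpi_1$; (c) $\Phi=E_7$, $V$ with highest weight $\varpi_7$. $G(\Phi,R)$ is the Chevalley group of type $\Phi$ over $R$ whose weight lattice is generated by the weights of $V$; $x_\alpha(\xi)$ are root unipotents; $\Lambda$ is the set of weights of $V$ and elements of $G(\Phi,R)$ are matrices $(g_{\lambda,\mu})$ in a weight basis $\{v^\lambda\}$ with $x_\alpha(\xi)v^\lambda=v^\lambda\pm\xi v^{\lambda+\alpha}$ if $\lambda+\alpha\in\Lambda$, $=v^\lambda$ otherwise. $d(\lambda,\mu)$ is the distance in the weight graph on $\Lambda$ (weights adjacent iff their difference is a root). Root type elements: $\mathfrak{R}$ is the smallest closed subscheme (over $\mathbb{Z}$) of the group scheme $G(\Phi,-)$ such that $h\,x_{\alpha}(1)h^{-1}\in\mathfrak{R}(S)$ for every ring $S$, every $h\in G(\Phi,S)$ and a fixed root $\alpha$; $\mathfrak{R}(R)$ is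 its set of $R$-points. *)

From HB Require Import structures.
From mathcomp Require Import all_boot all_order all_algebra.
Set Implicit Arguments. Unset Strict Implicit. Unset Printing Implicit Defensive.
Import Order.TTheory GRing.Theory Num.Theory.
Local Open Scope ring_scope.

(* Euclidean vectors.  A vector is stored as its list of coordinates in      *)
(* Bourbaki's orthonormal basis e_1, e_2, ... MULTIPLIED BY 6 (so that all  *)
(* coordinates of roots and weights, which lie in (1/6)Z, become integers). *)
(* Roots have squared length 2, so <v, a^vee> = (v, a) = vdot v a / 36.     *)
Definition vec := seq int.
Definition vadd (u v : vec) : vec := [seq x.1 + x.2 | x <- zip u v].
Definition vscale (a : int) (v : vec) : vec := [seq a * x | x <- v].
Definition vsub (u v : vec) : vec := vadd u (vscale (-1) v).
Definition vdot (u v : vec) : int := foldr (fun x acc => x.1 * x.2 + acc) 0 (zip u v).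
Definition pairing (v a : vec) : int := (vdot v a %/ 36)%Z.
Definition vzero (len : nat) : vec := nseq len 0.
Definition unitv (len i : nat) : vec := mkseq (fun k => if k == i then 6 else 0) len.

(* all vectors of length k with entries +-1/2 (stored as +-3) *)
Fixpoint hvecs (k : nat) : seq vec :=
  if k is k'.+1 then [seq a :: v | a <- [:: 3; -3], v <- hvecs k']
  else [:: [::]].
Definition nneg (v : vec) : nat := count (fun x : int => x < 0) v.

(* +- e_i +- e_j, 0 <= i < j < m (0-indexed), inside R^len *)
Definition pmpairs (len m : nat) : seq vec :=
  flatten [seq flatten [seq
     [seq vadd (vscale a (unitv len i)) (vscale b (unitv len j))
        | a <- [:: 1; -1], b <- [:: 1; -1]]
     | j <- iota i.+1 (m - i.+1)] | i <- iota 0 m].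

Definition refl (a v : vec) : vec := vsub v (vscale (pairing v a) a).
Definition orbit_step (R : seq vec) (S : seq vec) : seq vec :=
  undup (S ++ [seq refl a v | v <- S, a <- R]).
Definition worbit (R : seq vec) (w : vec) (fuel : nat) : seq vec :=
  iter fuel (orbit_step R) [:: w].

(* The three cases (Bourbaki plates IV, V, VI).                             *)
Inductive case := CaseD of nat | CaseE6 | CaseE7.

(* D_l with l >= 5, half-spin representation, highest weight varpi_l *)
Definition case_ok (c : case) : bool :=
  if c is CaseD l then (5 <= l)%N else true.

Definition rootsE6 : seq vec :=
  pmpairs 8 5 ++
  flatten [seq [:: v ++ [:: -3; -3; 3];
                   vscale (-1) (v ++ [:: -3; -3; 3])]
          | v <- hvecs 5 & ~~ odd (nneg v)].
Definition rootsE7 : seq vec :=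
  pmpairs 8 6 ++ [:: vsub (unitv 8 6) (unitv 8 7); vsub (unitv 8 7) (unitv 8 6)] ++
  flatten [seq [:: v ++ [:: 3; -3];
                   vscale (-1) (v ++ [:: 3; -3])]
          | v <- hvecs 6 & odd (nneg v)].

Definition Phi (c : case) : seq vec :=
  match c with
  | CaseD l => pmpairs l l
  | CaseE6 => rootsE6
  | CaseE7 => rootsE7
  end.

(* highest weights: varpi_1 = 2/3 (e8 - e7 - e6) for E6,
   varpi_7 = e6 + 1/2 (e8 - e7) for E7 *)
Definition varpiE6 : vec := [:: 0; 0; 0; 0; 0; -4; -4; 4].
Definition varpiE7 : vec := [:: 0; 0; 0; 0; 0; 6; -3; 3].

(* the set Lambda of weights of V (all of multiplicity one: V is minuscule).
   E6, E7: the Weyl orbit of the highest weight, computed as the closure of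
   {varpi} under the reflections s_a, a in Phi (the weight graph has diameter
   2 resp. 3, so 3 resp. 4 closure steps reach the whole orbit, of size 27
   resp. 56). *)
Definition weights (c : case) : seq vec :=
  match c with
  | CaseD l => [seq v <- hvecs l | ~~ odd (nneg v)]
  | CaseE6 => worbit rootsE6 varpiE6 3
  | CaseE7 => worbit rootsE7 varpiE7 4
  end.

Definition dimV (c : case) : nat := size (weights c).
Definition wt (c : case) (i : 'I_(dimV c)) : vec := nth [::] (weights c) i.

Definition wadj (c : case) (i j : 'I_(dimV c)) : bool :=
  vsub (wt i) (wt j) \in Phi c.
Fixpoint within (c : case) (k : nat) (i j : 'I_(dimV c)) : bool :=
  if k is k'.+1 then within k' i j || [exists m, within k' i m && wadj m j]
  else i == j.
(* d(i, j) = least k with a path of length k (dimV c if none) *)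
Definition wdist (c : case) (i j : 'I_(dimV c)) : nat :=
  find (fun k => within k i j) (iota 0 (dimV c)).

(* A sign system eps: e_a v^mu = (eps a mu) v^(mu+a) if mu + a is a weight, *)
(* and 0 otherwise; the column mu of a matrix is the image of v^mu.         *)
Definition signs (c : case) := vec -> 'I_(dimV c) -> bool.

Definition emat (c : case) (eps : signs c) (R : pzRingType) (a : vec)
  : 'M[R]_(dimV c) :=
  \matrix_(i, j) (if wt i == vadd (wt j) a then (if eps a j then 1 else -1)
                  else 0).

Definition xroot (c : case) (eps : signs c) (R : pzRingType) (a : vec) (xi : R)
  : 'M[R]_(dimV c) := 1%:M + xi *: emat eps R a.

(* eps comes from a Chevalley basis of the Lie algebra acting on the
   admissible lattice of V: the e_a satisfy the Chevalley commutation
   relations [e_a, e_b] = +- e_(a+b) (a+b root), 0 (a+b not a root, nonzero),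
   and [e_a, e_-a] = h_a acting on v^mu by <mu, a^vee>. *)
Definition chevalley_signs (c : case) (eps : signs c) : Prop :=
  forall a b : vec, a \in Phi c -> b \in Phi c ->
    let C := emat eps rat a *m emat eps rat b - emat eps rat b *m emat eps rat a in
    if vadd a b \in Phi c then
      C = emat eps rat (vadd a b) \/ C = - emat eps rat (vadd a b)
    else if vadd a b == vzero (size a) then
      C = \matrix_(i, j) (if i == j then (pairing (wt i) a)%:~R else 0)
    else C = 0.

Inductive zpoly (n : nat) : Type :=
| ZVar of 'I_n & 'I_n
| ZConst of int
| ZAdd of zpoly n & zpoly n
| ZMul of zpoly n & zpoly n
| ZOpp of zpoly n.

Fixpoint zeval (n : nat) (R : pzRingType) (f : zpoly n) (g : 'M[R]_n) : R :=
  match f with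
  | ZVar i j => g i j
  | ZConst z => z%:~R
  | ZAdd f1 f2 => zeval f1 g + zeval f2 g
  | ZMul f1 f2 => zeval f1 g * zeval f2 g
  | ZOpp f1 => - zeval f1 g
  end.

Inductive elem (c : case) (eps : signs c) (S : comPzRingType)
  : 'M[S]_(dimV c) -> Prop :=
| elem1 : elem eps 1%:M
| elemM g a xi : elem eps g -> a \in Phi c ->
                 elem eps (g *m xroot eps a (xi : S)).

Definition invertible (n : nat) (S : pzRingType) (g : 'M[S]_n) : Prop :=
  exists h : 'M[S]_n, g *m h = 1%:M /\ h *m g = 1%:M.

(* The Chevalley group scheme G(Phi, -) in GL(V): the closed subscheme of
   GL(V) cut out by the integer polynomials vanishing on E(Phi, S) for all
   commutative rings S (its Zariski closure; this is the Chevalley-Demazure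
   group scheme whose weight lattice is generated by the weights of V). *)
Definition inG (c : case) (eps : signs c) (R : comPzRingType)
  (g : 'M[R]_(dimV c)) : Prop :=
  invertible g /\
  forall f : zpoly (dimV c),
    (forall (S : comPzRingType) (h : 'M[S]_(dimV c)), elem eps h -> zeval f h = 0) ->
    zeval f g = 0.

(* Root type elements: R-points of the smallest closed subscheme of G
   containing h x_a(1) h^-1 for all rings S and h in G(S). *)
Definition root_type (c : case) (eps : signs c) (a : vec) (R : comPzRingType)
  (g : 'M[R]_(dimV c)) : Prop :=
  inG eps g /\
  forall f : zpoly (dimV c),
    (forall (S : comPzRingType) (h h' : 'M[S]_(dimV c)),
        inG eps h -> h *m h' = 1%:M -> h' *m h = 1%:M ->
        zeval f (h *m xroot eps a (1 : S) *m h') = 0) ->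
    zeval f g = 0.

(* A root type element g is a Zariski limit of the conjugates h x_a(1) h^-1 = 1 + h e_a h^-1.
   For h in E(Phi, S), the matrix h e_a h^-1 stays in the S-span [lie_mx] of the e_b and of
   suitable diagonal matrices: conjugating by x_b(t) only produces e_a, [e_b, e_a] and
   e_b e_a e_b, which the Chevalley relations and minusculity (all pairings <lambda, b^vee> lie
   in {-1, 0, 1}) keep in that span.  Every matrix of that span has zero entries between
   non-adjacent weights, and entries labelled by the same root agree up to a fixed sign.
   Writing h^-1 = det(h)^-1 adj(h), such a linear relation between two off-diagonal entries is
   an integral polynomial identity on E(Phi, -), hence holds on G(Phi, -) and then on all root
   type elements. *)

From Pilot Require Import Defs.
From HB Require Import structures.
From mathcomp Require Import all_boot all_order all_algebra.
From mathcomp Require Import fingroup perm zify ring.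
Import Order.TTheory GRing.Theory Num.Theory.

Set Implicit Arguments.
Unset Strict Implicit.
Unset Printing Implicit Defensive.

Local Open Scope ring_scope.

Section Vectors.

Implicit Types (u v w : vec) (k : int).

Lemma size_vadd u v : size (vadd u v) = minn (size u) (size v).
Proof. by rewrite size_map size_zip. Qed.

Lemma size_vscale k u : size (vscale k u) = size u.
Proof. exact: size_map. Qed.

Lemma size_unitv l i : size (unitv l i) = l.
Proof. exact: size_mkseq. Qed.

Lemma vadd_cons x u y v : vadd (x :: u) (y :: v) = x + y :: vadd u v.
Proof. by []. Qed.

Lemma vdot_nill v : vdot [::] v = 0. Proof. by case: v. Qed.
Lemma vdot_nilr v : vdot v [::] = 0. Proof. by case: v. Qed.

Lemma vdot_cons x u y v : vdot (x :: u) (y :: v) = x * y + vdot u v.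
Proof. by []. Qed.

Lemma vdotC u v : vdot u v = vdot v u.
Proof.
elim: u v => [|x u IH] [|y v]; rewrite ?vdot_nill ?vdot_nilr //.
by rewrite !vdot_cons IH mulrC.
Qed.

Lemma vdotDl u v w : size u = size v -> vdot (vadd u v) w = vdot u w + vdot v w.
Proof.
elim: u v w => [|x u IH] [|y v] [|z w] //= [Huv]; rewrite ?vdot_nill ?vdot_nilr ?addr0 //.
by rewrite !vdot_cons IH // mulrDl addrACA.
Qed.

Lemma vdotZl k u w : vdot (vscale k u) w = k * vdot u w.
Proof.
elim: u w => [|x u IH] [|z w]; rewrite ?vdot_nill ?vdot_nilr ?mulr0 //.
by rewrite /= vdot_cons IH mulrDr mulrA.
Qed.

Lemma vdotBl u v w : size u = size v -> vdot (vsub u v) w = vdot u w - vdot v w.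
Proof. by move=> Huv; rewrite vdotDl ?size_vscale // vdotZl mulN1r. Qed.

Lemma vdotDr u v w : size u = size v -> vdot w (vadd u v) = vdot w u + vdot w v.
Proof. by move=> Huv; rewrite !(vdotC w) vdotDl. Qed.

Lemma vdotZr k u w : vdot w (vscale k u) = k * vdot w u.
Proof. by rewrite !(vdotC w) vdotZl. Qed.

Lemma vdotBr u v w : size u = size v -> vdot w (vsub u v) = vdot w u - vdot w v.
Proof. by move=> Huv; rewrite !(vdotC w) vdotBl. Qed.

Lemma vdot_ge0 v : 0 <= vdot v v.
Proof. by elim: v => //= x v IH; rewrite vdot_cons addr_ge0 // -expr2 sqr_ge0. Qed.

Lemma vdot_eq0 v : vdot v v = 0 -> v = vzero (size v).
Proof.
elim: v => //= x v IH; rewrite vdot_cons => /eqP.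
rewrite paddr_eq0 ?vdot_ge0 -?expr2 ?sqr_ge0 // sqrf_eq0 => /andP[/eqP -> /eqP /IH {1}->].
by [].
Qed.

Lemma vadd_eqE u v w : size u = size v -> size v = size w ->
  (u == vadd v w) = (vsub u v == w).
Proof.
elim: u v w => [|x u IH] [|y v] [|z w] //= [Huv] [Hvw].
by rewrite !eqseq_cons IH //; congr andb; apply/eqP/eqP => [->|<-] /=; ring.
Qed.

Lemma vsubvv u : vsub u u = vzero (size u).
Proof. by elim: u => // x u IH; rewrite /vsub /= vadd_cons -/(vsub u u) IH; congr cons; ring. Qed.

Lemma nth_vadd u v (m : nat) : size u = size v -> nth 0 (vadd u v) m = nth 0 u m + nth 0 v m.
Proof.
elim: u v m => [|x u IH] [|y v] [|m] //= [Huv]; rewrite ?nth_nil ?addr0 //.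
exact: IH.
Qed.

Lemma nth_vscale k u (m : nat) : nth 0 (vscale k u) m = k * nth 0 u m.
Proof. by elim: u m => [|x u IH] [|m] //=; rewrite mulr0. Qed.

Lemma vdot_delta_iota w (s i : nat) :
  vdot w [seq (if m == i then 6 else 0 : int) | m <- iota s (size w)] =
  if (s <= i < s + size w)%N then 6 * nth 0 w (i - s) else 0.
Proof.
elim: w s => [|x w IH] s /=; first by rewrite addn0; case: ltnP => //; rewrite ltnNge => ->.
rewrite vdot_cons IH; case: (ltngtP s i) => Hsi /=.
- by rewrite mulr0 add0r addSn addnS -(subnSK Hsi).
- by rewrite mulr0 add0r.
- by rewrite Hsi subnn addnS ltnS leq_addr addr0 mulrC.
Qed.

Lemma vdot_unitv w (i : nat) : (i < size w)%N -> vdot w (unitv (size w) i) = 6 * nth 0 w i.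
Proof. by move=> Hi; rewrite /unitv /mkseq vdot_delta_iota /= Hi subn0. Qed.

End Vectors.

Lemma vdot_pairing w a : vdot w a \in [:: -36; 0; 36] -> vdot w a = pairing w a * 36.
Proof. by rewrite /pairing !inE => /or3P[] /eqP ->. Qed.

Section ExceptionalRootData.

Implicit Types (R : seq vec) (a w : vec).

(* In the coordinates of [Defs] (scaled by 6), (a, a) = 2 reads [vdot a a = 72] and a
   pairing <w, a^vee> = (w, a) in {-1, 0, 1} reads [vdot w a] in {-36, 0, 36}. *)
Definition root_datab R : bool :=
  all (fun a => [&& size a == 8%N, vdot a a == 72 &
         all (fun b => (36 %| vdot a b)%Z && (refl a b \in R)) R]) R.

Definition minusculeb R w : bool :=
  (size w == 8%N) && all (fun a => vdot w a \in [:: -36; 0; 36]) R.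

Lemma minusculeb_refl R a w : root_datab R -> a \in R -> minusculeb R w ->
  minusculeb R (refl a w).
Proof.
move=> /allP HR aR /andP[/eqP sw /allP Hw].
have /and3P[/eqP sa _ /allP Ha] := HR a aR.
apply/andP; split; first by rewrite /refl /vsub size_vadd !size_vscale sw sa.
apply/allP => b bR; have /and3P[/eqP sb _ _] := HR b bR.
have /andP[dab rab] := Ha b bR.
have := Hw _ rab.
rewrite /refl vdotBr ?size_vscale ?sb ?sa // vdotZr vdotBl ?size_vscale ?sw ?sa // vdotZl.
have -> : vdot a b = pairing b a * 36 by rewrite /pairing [vdot b a]vdotC divzK.
by rewrite (vdot_pairing (Hw a aR)) mulrCA.
Qed.

Lemma minusculeb_worbit R w0 k w : root_datab R -> minusculeb R w0 ->
  w \in worbit R w0 k -> minusculeb R w.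
Proof.
move=> HR Hw0; elim: k w => [|k IH] w /=; first by rewrite inE => /eqP ->.
rewrite /orbit_step mem_undup mem_cat => /orP[/IH //|].
by case/allpairsPdep => v [b [vS bR ->]]; apply: minusculeb_refl => //; apply: IH.
Qed.

Lemma root_datab_E6 : root_datab rootsE6. Proof. by vm_compute. Qed.
Lemma root_datab_E7 : root_datab rootsE7. Proof. by vm_compute. Qed.
Lemma minusculeb_E6 : minusculeb rootsE6 varpiE6. Proof. by vm_compute. Qed.
Lemma minusculeb_E7 : minusculeb rootsE7 varpiE7. Proof. by vm_compute. Qed.

End ExceptionalRootData.

Lemma hvecsP k w : w \in hvecs k -> size w = k /\ all (mem [:: 3; -3]) w.
Proof.
elim: k w => [|k IH] w /=; first by rewrite inE => /eqP ->.
rewrite !mem_cat in_nil orbF => /orP[] /mapP[v /IH[<- Hv] ->]; by rewrite /= Hv.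
Qed.

Lemma pmpairsP l v : v \in pmpairs l l -> exists i j a b,
  [/\ (i < j < l)%N, a \in [:: 1; -1], b \in [:: 1; -1] &
      v = vadd (vscale a (unitv l i)) (vscale b (unitv l j))].
Proof.
case/flattenP => s /mapP[i]; rewrite mem_iota add0n => /andP[_ il] ->.
case/flattenP => s' /mapP[j]; rewrite mem_iota => /andP[ij jl] ->.
case/allpairsPdep => a [b [ain bin ->]].
by exists i, j, a, b; split; rewrite // ij; move: jl; rewrite subnKC.
Qed.

Lemma vdot_pmpair l i j a b w : (i < j < l)%N -> size w = l ->
  vdot w (vadd (vscale a (unitv l i)) (vscale b (unitv l j))) =
  a * (6 * nth 0 w i) + b * (6 * nth 0 w j).
Proof.
move=> /andP[ij jl] sw; subst l.
by rewrite vdotDr ?size_vscale ?size_unitv // !vdotZr !vdot_unitv // (ltn_trans ij jl).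
Qed.

Definition ambient_dim (c : case) : nat := if c is CaseD l then l else 8%N.

Lemma roots_norm c a : case_ok c -> a \in Phi c -> size a = ambient_dim c /\ vdot a a = 72.
Proof.
case: c => [l||] /= _.
- case/pmpairsP => i [j [x [y [ijl xin yin ->]]]].
  have sz : size (vadd (vscale x (unitv l i)) (vscale y (unitv l j))) = l.
    by rewrite size_vadd !size_vscale !size_unitv minnn.
  split => //; rewrite vdot_pmpair //.
  have /andP[ij jl] := ijl; have il := ltn_trans ij jl.
  rewrite !nth_vadd ?size_vscale ?size_unitv // !nth_vscale /unitv !nth_mkseq //.
  rewrite !eqxx (ltn_eqF ij) (gtn_eqF ij).
  by move: xin yin; rewrite !inE => /orP[]/eqP-> /orP[]/eqP->.
- by move=> /(allP root_datab_E6) /and3P[/eqP -> /eqP -> _].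
- by move=> /(allP root_datab_E7) /and3P[/eqP -> /eqP -> _].
Qed.

Lemma weights_minuscule c w : case_ok c -> w \in weights c ->
  size w = ambient_dim c /\ forall a, a \in Phi c -> vdot w a \in [:: -36; 0; 36].
Proof.
case: c => [l||] _ Hw.
- move: Hw; rewrite mem_filter => /andP[_ /hvecsP [sw /allP Hw]].
  split => // v /pmpairsP [i [j [x [y [ijl xin yin ->]]]]].
  rewrite vdot_pmpair //.
  have /andP[ij jl] := ijl; have il := ltn_trans ij jl.
  have := Hw _ (mem_nth 0 (_ : (i < size w)%N)); rewrite sw => /(_ il).
  have := Hw _ (mem_nth 0 (_ : (j < size w)%N)); rewrite sw => /(_ jl).
  by move: xin yin; rewrite !inE => /orP[]/eqP-> /orP[]/eqP-> /orP[]/eqP-> /orP[]/eqP->.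
- have /andP[/eqP -> /allP Ha] := minusculeb_worbit (k := 3) root_datab_E6 minusculeb_E6 Hw.
  by split.
- have /andP[/eqP -> /allP Ha] := minusculeb_worbit (k := 4) root_datab_E7 minusculeb_E7 Hw.
  by split.
Qed.

Section Weights.

Variables (c : case) (Hc : case_ok c).
Implicit Types (i j : 'I_(dimV c)) (a b : vec).

Lemma wt_mem i : wt i \in weights c.
Proof. exact: mem_nth. Qed.

Lemma size_wt i : size (wt i) = ambient_dim c.
Proof. exact: (weights_minuscule Hc (wt_mem i)).1. Qed.

Lemma vdot_wt_root i a : a \in Phi c -> vdot (wt i) a \in [:: -36; 0; 36].
Proof. exact: (weights_minuscule Hc (wt_mem i)).2. Qed.

Lemma size_root a : a \in Phi c -> size a = ambient_dim c.
Proof. by move=> aR; have [] := roots_norm Hc aR. Qed.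

Lemma vdot_root a : a \in Phi c -> vdot a a = 72.
Proof. by move=> aR; have [] := roots_norm Hc aR. Qed.

Lemma vzero_notin_Phi : vzero (ambient_dim c) \notin Phi c.
Proof.
apply/negP => /vdot_root; rewrite /vzero.
by elim: (ambient_dim c) => //= k IH; rewrite vdot_cons mul0r add0r.
Qed.

Lemma wt_shift_eqE i j a : a \in Phi c ->
  (wt i == vadd (wt j) a) = (vsub (wt i) (wt j) == a).
Proof. by move=> aR; rewrite vadd_eqE // ?size_wt ?size_root. Qed.

Lemma vdot_wt_shift i j a b : a \in Phi c -> wt i = vadd (wt j) a ->
  vdot (wt i) b = vdot (wt j) b + vdot a b.
Proof. by move=> aR ->; rewrite vdotDl // size_wt size_root. Qed.

(* (wt i, a) = (wt j, a) + 2, and both pairings lie in {-1, 0, 1}. *)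
Lemma wt_shift_pairing i j a : a \in Phi c -> wt i = vadd (wt j) a ->
  vdot (wt j) a = -36 /\ vdot (wt i) a = 36.
Proof.
move=> aR Hij; have := vdot_wt_shift a aR Hij; rewrite vdot_root //.
have := vdot_wt_root i aR; have := vdot_wt_root j aR; rewrite !inE.
by move=> /or3P[]/eqP-> /or3P[]/eqP->.
Qed.

Lemma root_vadd_eq0 a b : a \in Phi c -> b \in Phi c -> vdot a b = -72 ->
  vadd b a = vzero (ambient_dim c).
Proof.
move=> aR bR Hab; have <- : size (vadd b a) = ambient_dim c.
  by rewrite size_vadd !size_root // minnn.
apply: vdot_eq0.
rewrite vdotDl ?size_root // !vdotDr ?size_root //.
by rewrite !vdot_root // Hab vdotC Hab.
Qed.

Lemma vsub_wt_self i : vsub (wt i) (wt i) \notin Phi c.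
Proof. by rewrite vsubvv size_wt vzero_notin_Phi. Qed.

End Weights.

Section RootElements.

Variables (c : case) (Hc : case_ok c) (eps : signs c).
Implicit Types (i j : 'I_(dimV c)) (a b : vec).

Local Notation n := (dimV c).

Lemma emat_sqr (S : pzRingType) b : b \in Phi c -> emat eps S b *m emat eps S b = 0.
Proof.
move=> bR; apply/matrixP => i j; rewrite !mxE big1 // => k _; rewrite !mxE.
case: eqP => [Hik|_]; last by rewrite mul0r.
case: eqP => [Hkj|_]; last by rewrite mulr0.
by have [_] := wt_shift_pairing Hc bR Hkj; have [->] := wt_shift_pairing Hc bR Hik.
Qed.

(* A nonzero entry of [e_b e_a e_b] forces (a, b) = -2, i.e. a = -b. *)
Lemma emat_sandwich (S : pzRingType) a b : a \in Phi c -> b \in Phi c ->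
  vadd b a != vzero (ambient_dim c) ->
  emat eps S b *m emat eps S a *m emat eps S b = 0.
Proof.
move=> aR bR Hba; apply/matrixP => i j; rewrite !mxE big1 // => l _.
rewrite !mxE mulr_suml big1 // => k _; rewrite !mxE.
case: eqP => [Hik|_]; last by rewrite !mul0r.
case: eqP => [Hkl|_]; last by rewrite mulr0 mul0r.
case: eqP => [Hlj|_]; last by rewrite mulr0.
have [Hk _] := wt_shift_pairing Hc bR Hik; have [_ Hl] := wt_shift_pairing Hc bR Hlj.
have := vdot_wt_shift Hc b aR Hkl; rewrite Hk Hl => Hab.
by move: Hba; rewrite (root_vadd_eq0 Hc aR bR) ?eqxx //; lia.
Qed.

Lemma xrootN (S : comPzRingType) b (t : S) : b \in Phi c ->
  xroot eps b t *m xroot eps b (- t) = 1%:M.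
Proof.
move=> bR; rewrite /xroot mulmxDl mul1mx mulmxDr mulmx1 -scalemxAl -scalemxAr.
by rewrite emat_sqr // !scaler0 addr0 scaleNr addrAC -addrA subrr addr0.
Qed.

Definition hmat (S : pzRingType) a : 'M[S]_n :=
  \matrix_(i, j) (if i == j then (pairing (wt i) a)%:~R else 0).

Lemma hmat_diag (S : pzRingType) a : hmat S a = diag_mx (\row_i (pairing (wt i) a)%:~R).
Proof. by apply/matrixP => i j; rewrite !mxE; case: eqP. Qed.

Lemma emat_hmat (S : pzRingType) b : b \in Phi c -> emat eps S b *m hmat S b = - emat eps S b.
Proof.
move=> bR; apply/matrixP => i j; rewrite hmat_diag mul_mx_diag !mxE.
case: eqP => [Hij|]; last by rewrite mul0r oppr0.
by rewrite /pairing (wt_shift_pairing Hc bR Hij).1 mulrN1.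
Qed.

Lemma map_emat (S : pzRingType) a : emat eps S a = map_mx intr (emat eps int a).
Proof. by apply/matrixP => i j; rewrite !mxE; case: eqP; case: (eps a j). Qed.

Lemma map_hmat (S : pzRingType) a : hmat S a = map_mx intr (hmat int a).
Proof. by apply/matrixP => i j; rewrite !mxE intz; case: eqP. Qed.

End RootElements.

Arguments hmat {c} _ _.

Lemma map_mx_intr_inj m (A B : 'M[int]_m) :
  map_mx (intr : int -> rat) A = map_mx intr B -> A = B.
Proof. by move/matrixP => AB; apply/matrixP => i j; move: (AB i j); rewrite !mxE => /intr_inj. Qed.

(* The relations are imposed over [rat] only; they descend to [int] and hence to any ring. *)
Lemma chevalley_relation c (eps : signs c) (S : pzRingType) a b :
  chevalley_signs eps -> a \in Phi c -> b \in Phi c ->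
  let C := emat eps S a *m emat eps S b - emat eps S b *m emat eps S a in
  if vadd a b \in Phi c then
    C = emat eps S (vadd a b) \/ C = - emat eps S (vadd a b)
  else if vadd a b == vzero (size a) then C = hmat S a
  else C = 0.
Proof.
move=> Hch aR bR /=; have := Hch a b aR bR; rewrite /=.
set C := emat eps int a *m emat eps int b - emat eps int b *m emat eps int a.
have mapC (T : pzRingType) :
    emat eps T a *m emat eps T b - emat eps T b *m emat eps T a = map_mx intr C.
  by rewrite map_mxB !map_mxM -!map_emat.
rewrite !mapC.
case: ifP => _.
  by rewrite !(map_emat eps rat) -map_mxN => -[] /map_mx_intr_inj ->;
    [left|right]; rewrite ?map_mxN -map_emat.
case: ifP => _.
  by rewrite -[X in _ = X -> _]/(hmat rat a) map_hmat => /map_mx_intr_inj ->; rewrite -map_hmat.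
by rewrite -(map_mx0 intr) => /map_mx_intr_inj ->; rewrite map_mx0.
Qed.

Section LieMatrices.

Variables (c : case) (eps : signs c) (S : comPzRingType).
Local Notation n := (dimV c).
Implicit Types (X Y : 'M[S]_n) (d : 'rV[S]_n) (a b : vec).

(* This condition is what makes [e_b, diag d] a multiple of e_b. *)
Definition wt_compatible d : Prop :=
  exists psi : vec -> S, forall i j, vsub (wt i) (wt j) \in Phi c ->
    d 0 i - d 0 j = psi (vsub (wt i) (wt j)).

Definition lie_mx X : Prop :=
  exists (cf : vec -> S) d, wt_compatible d /\
    X = \sum_(a <- undup (Phi c)) cf a *: emat eps S a + diag_mx d.

Lemma wt_compatibleD d d' : wt_compatible d -> wt_compatible d' -> wt_compatible (d + d').
Proof.
move=> [psi Hd] [psi' Hd']; exists (fun v => psi v + psi' v) => i j ij.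
by rewrite !mxE -Hd // -Hd' // opprD addrACA.
Qed.

Lemma wt_compatibleZ k d : wt_compatible d -> wt_compatible (k *: d).
Proof. by move=> [psi Hd]; exists (fun v => k * psi v) => i j ij; rewrite !mxE -mulrBr Hd. Qed.

Lemma lie_mxD X Y : lie_mx X -> lie_mx Y -> lie_mx (X + Y).
Proof.
move=> [cf [d [Hd ->]]] [cf' [d' [Hd' ->]]].
exists (fun a => cf a + cf' a), (d + d'); split; first exact: wt_compatibleD.
rewrite raddfD addrACA -big_split; congr (_ + _).
by apply: eq_bigr => a _; rewrite scalerDl.
Qed.

Lemma lie_mxZ k X : lie_mx X -> lie_mx (k *: X).
Proof.
move=> [cf [d [Hd ->]]]; exists (fun a => k * cf a), (k *: d).
split; first exact: wt_compatibleZ.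
rewrite scalerDr linearZ scaler_sumr; congr (_ + _).
by apply: eq_bigr => a _; rewrite scalerA.
Qed.

Lemma lie_mxN X : lie_mx X -> lie_mx (- X).
Proof. by rewrite -scaleN1r; apply: lie_mxZ. Qed.

Lemma lie_mxB X Y : lie_mx X -> lie_mx Y -> lie_mx (X - Y).
Proof. by move=> HX /lie_mxN; apply: lie_mxD. Qed.

Lemma lie_mx_diag d : wt_compatible d -> lie_mx (diag_mx d).
Proof.
move=> Hd; exists (fun _ => 0), d; split => //.
by rewrite big1 ?add0r // => a _; rewrite scale0r.
Qed.

Lemma lie_mx0 : lie_mx 0.
Proof.
rewrite -(raddf0 (@diag_mx S n)); apply: lie_mx_diag.
by exists (fun _ => 0) => i j _; rewrite !mxE subr0.
Qed.

Lemma lie_mx_emat a : a \in Phi c -> lie_mx (emat eps S a).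
Proof.
move=> aR; exists (fun v => (v == a)%:R), 0; split.
  by exists (fun _ => 0) => i j _; rewrite !mxE subr0.
rewrite raddf0 addr0 (bigD1_seq a) ?mem_undup ?undup_uniq //= eqxx scale1r big1 ?addr0 //.
by move=> v /negbTE ->; rewrite scale0r.
Qed.

Variable Hc : case_ok c.

Lemma lie_mx_hmat a : a \in Phi c -> lie_mx (hmat S a).
Proof.
move=> aR; rewrite hmat_diag; apply: lie_mx_diag.
exists (fun v => (vdot v a %/ 36)%Z%:~R) => i j ij; rewrite !mxE -intrB.
rewrite vdotBl ?(size_wt Hc) // (vdot_pairing (vdot_wt_root Hc i aR)).
by rewrite (vdot_pairing (vdot_wt_root Hc j aR)) -mulrBl mulzK.
Qed.

End LieMatrices.

Section Conjugation.

Variables (c : case) (Hc : case_ok c) (eps : signs c) (Hch : chevalley_signs eps).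
Variable S : comPzRingType.
Local Notation n := (dimV c).
Local Notation E := (emat eps S).
Implicit Types (X : 'M[S]_n) (a b : vec) (t : S).

Definition xconj b t X := xroot eps b t *m X *m xroot eps b (- t).

Lemma xconjE b t X :
  xconj b t X = X + t *: (E b *m X - X *m E b) - (t * t) *: (E b *m X *m E b).
Proof.
rewrite /xconj /xroot mulmxDl mul1mx -scalemxAl mulmxDr mulmx1 -scalemxAr mulmxDl -scalemxAl.
by rewrite scalerBr !scaleNr scalerDr scalerA opprD !addrA.
Qed.

Lemma lie_mx_xconj_emat a b t : a \in Phi c -> b \in Phi c -> lie_mx eps (xconj b t (E a)).
Proof.
move=> aR bR; rewrite xconjE.
have := chevalley_relation S Hch bR aR; rewrite /=.
case: ifP => [baR HC|_].
  rewrite emat_sandwich // ?scaler0 ?subr0; last first.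
    by apply: contraTneq baR => ->; rewrite vzero_notin_Phi.
  apply: lie_mxD; first exact: lie_mx_emat.
  by apply: lie_mxZ; case: HC => ->; [|apply: lie_mxN]; apply: lie_mx_emat.
case: ifP => [_ HC|/negbT ba0 ->]; last first.
  rewrite emat_sandwich //; last by rewrite -(size_root Hc bR).
  by rewrite !scaler0 subr0 addr0; apply: lie_mx_emat.
(* [e_a, e_b] = -h_b and e_b h_b = -e_b give e_b e_a e_b = e_b. *)
have -> : E b *m E a *m E b = E b.
  rewrite -mulmxA (_ : E a *m E b = E b *m E a - hmat S b); last first.
    by rewrite -HC opprB addrC subrK.
  by rewrite mulmxBr mulmxA emat_sqr // mul0mx sub0r emat_hmat // opprK.
rewrite HC; apply: lie_mxB; first apply: lie_mxD; first exact: lie_mx_emat.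
  by apply: lie_mxZ; apply: lie_mx_hmat.
by apply: lie_mxZ; apply: lie_mx_emat.
Qed.

Lemma lie_mx_xconj_diag b t d : b \in Phi c -> wt_compatible d ->
  lie_mx eps (xconj b t (diag_mx d)).
Proof.
move=> bR Hd; have [psi Hpsi] := Hd; rewrite xconjE.
have comm : E b *m diag_mx d - diag_mx d *m E b = - psi b *: E b.
  apply/matrixP => i j; rewrite mul_mx_diag mul_diag_mx !mxE.
  case: eqP => [Hij|_]; last by rewrite mul0r mulr0 subrr mulr0.
  have ij : vsub (wt i) (wt j) = b by apply/eqP; rewrite -(wt_shift_eqE Hc) // Hij.
  by have := Hpsi i j; rewrite ij => /(_ bR) <-; ring.
have -> : E b *m diag_mx d *m E b = 0.
  rewrite -[E b *m _](subrK (diag_mx d *m E b)) comm mulmxDl -scalemxAl -mulmxA.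
  by rewrite emat_sqr // mulmx0 scaler0 addr0.
rewrite comm scaler0 subr0; apply: lie_mxD; first exact: lie_mx_diag.
by apply/lie_mxZ/lie_mxZ/lie_mx_emat.
Qed.

Lemma lie_mx_xconj b t X : b \in Phi c -> lie_mx eps X -> lie_mx eps (xconj b t X).
Proof.
move=> bR [cf [d [Hd ->]]].
rewrite /xconj (mulmxDr (xroot eps b t)) mulmxDl mulmx_sumr mulmx_suml.
apply: lie_mxD; last exact: lie_mx_xconj_diag.
rewrite big_seq; apply: big_ind => [|Y Z|a]; [exact: lie_mx0 | exact: lie_mxD |].
rewrite mem_undup -scalemxAr -scalemxAl => aR.
exact/lie_mxZ/lie_mx_xconj_emat.
Qed.

Lemma elem_conj_lie_mx h : elem eps h -> exists h' : 'M[S]_n,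
  [/\ h *m h' = 1%:M, h' *m h = 1%:M & forall X, lie_mx eps X -> lie_mx eps (h *m X *m h')].
Proof.
elim=> [|g b t _ [g' [gg' g'g Hg]] bR].
  by exists 1%:M; split; rewrite ?mulmx1 // => X; rewrite mulmx1 mul1mx.
exists (xroot eps b (- t) *m g'); split.
- by rewrite -mulmxA (mulmxA (xroot _ _ _)) xrootN // mul1mx.
- by rewrite -mulmxA (mulmxA g') g'g mul1mx -{2}[t]opprK xrootN.
- move=> X HX; have -> : g *m xroot eps b t *m X *m (xroot eps b (- t) *m g') =
                        g *m xconj b t X *m g' by rewrite /xconj !mulmxA.
  exact/Hg/lie_mx_xconj.
Qed.

End Conjugation.

Section PolynomialMatrices.

Variable n : nat.
Implicit Types (R : pzRingType).

Definition zsum (l : seq (zpoly n)) : zpoly n := foldr (@ZAdd n) (ZConst n 0) l.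
Definition zprod (l : seq (zpoly n)) : zpoly n := foldr (@ZMul n) (ZConst n 1) l.

Lemma zeval_sum R (l : seq (zpoly n)) (g : 'M[R]_n) : zeval (zsum l) g = \sum_(f <- l) zeval f g.
Proof. by elim: l => [|f l IH]; rewrite ?big_nil ?big_cons //= IH. Qed.

Lemma zeval_prod R (l : seq (zpoly n)) (g : 'M[R]_n) :
  zeval (zprod l) g = \prod_(f <- l) zeval f g.
Proof. by elim: l => [|f l IH]; rewrite ?big_nil ?big_cons //= IH. Qed.

Definition zmx_eval m R (P : 'I_m -> 'I_m -> zpoly n) (g : 'M[R]_n) : 'M[R]_m :=
  \matrix_(i, j) zeval (P i j) g.

Definition zmx_const m (A : 'M[int]_m) (i j : 'I_m) : zpoly n := ZConst n (A i j).

Definition zmx_mul m (P Q : 'I_m -> 'I_m -> zpoly n) (i j : 'I_m) : zpoly n :=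
  zsum [seq ZMul (P i k) (Q k j) | k <- index_enum 'I_m].

Definition zdet m (P : 'I_m -> 'I_m -> zpoly n) : zpoly n :=
  zsum [seq ZMul (ZConst n ((-1) ^+ s)) (zprod [seq P i (s i) | i <- index_enum 'I_m])
       | s : 'S_m <- index_enum {perm 'I_m}].

Definition zadj m (P : 'I_m -> 'I_m -> zpoly n) (i j : 'I_m) : zpoly n :=
  ZMul (ZConst n ((-1) ^+ (j + i))) (zdet (fun k l : 'I_m.-1 => P (lift j k) (lift i l))).

Lemma zmx_eval_var R (g : 'M[R]_n) : zmx_eval (@ZVar n) g = g.
Proof. by apply/matrixP => i j; rewrite mxE. Qed.

Lemma zmx_eval_const m R (A : 'M[int]_m) (g : 'M[R]_n) : zmx_eval (zmx_const A) g = map_mx intr A.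
Proof. by apply/matrixP => i j; rewrite !mxE. Qed.

Lemma zmx_eval_mul m R (P Q : 'I_m -> 'I_m -> zpoly n) (g : 'M[R]_n) :
  zmx_eval (zmx_mul P Q) g = zmx_eval P g *m zmx_eval Q g.
Proof.
apply/matrixP => i j; rewrite !mxE zeval_sum big_map.
by apply: eq_bigr => k _; rewrite !mxE.
Qed.

Lemma zeval_det m R (P : 'I_m -> 'I_m -> zpoly n) (g : 'M[R]_n) :
  zeval (zdet P) g = \det (zmx_eval P g).
Proof.
rewrite zeval_sum big_map; apply: eq_bigr => s _ /=.
rewrite intr_sign zeval_prod big_map; congr (_ * _).
by apply: eq_bigr => i _; rewrite mxE.
Qed.

Lemma zmx_eval_adj m R (P : 'I_m -> 'I_m -> zpoly n) (g : 'M[R]_n) :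
  zmx_eval (zadj P) g = \adj (zmx_eval P g).
Proof.
apply/matrixP => i j; rewrite !mxE /= intr_sign zeval_det /cofactor; congr (_ * \det _).
by apply/matrixP => k l; rewrite !mxE.
Qed.

Definition entry_gap R (i j k l : 'I_n) (z : int) (Y : 'M[R]_n) : R := Y i j - z%:~R * Y k l.

Definition zentry_gap (i j k l : 'I_n) (z : int) (P : 'I_n -> 'I_n -> zpoly n) : zpoly n :=
  ZAdd (P i j) (ZOpp (ZMul (ZConst n z) (P k l))).

Lemma zeval_entry_gap R i j k l z P (g : 'M[R]_n) :
  zeval (zentry_gap i j k l z P) g = entry_gap i j k l z (zmx_eval P g).
Proof. by rewrite /entry_gap !mxE. Qed.

Lemma entry_gapD R i j k l z (Y Y' : 'M[R]_n) :
  entry_gap i j k l z (Y + Y') = entry_gap i j k l z Y + entry_gap i j k l z Y'.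
Proof. by rewrite /entry_gap !mxE mulrDr opprD addrACA. Qed.

Lemma entry_gapZ (R : comPzRingType) i j k l z (t : R) (Y : 'M[R]_n) :
  entry_gap i j k l z (t *: Y) = t * entry_gap i j k l z Y.
Proof. by rewrite /entry_gap !mxE mulrBr mulrCA. Qed.

Lemma entry_gap1 R i j k l z : i != j -> k != l -> entry_gap i j k l z (1%:M : 'M[R]_n) = 0.
Proof. by move=> ij kl; rewrite /entry_gap !mxE (negbTE ij) (negbTE kl) mulr0 subrr. Qed.

End PolynomialMatrices.

Lemma adj_eq_scale_inv (R : comPzRingType) m (h h' : 'M[R]_m) :
  h *m h' = 1%:M -> \adj h = \det h *: h'.
Proof. by move=> hh'; rewrite -[\adj h]mulmx1 -hh' mulmxA mul_adj_mx mul_scalar_mx. Qed.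

Lemma inv_eq_scale_adj (R : comPzRingType) m (h h' : 'M[R]_m) :
  h *m h' = 1%:M -> h' *m h = 1%:M -> h' = \det h' *: \adj h.
Proof. by move=> hh' h'h; rewrite (adj_eq_scale_inv hh') scalerA -det_mulmx h'h det1 scale1r. Qed.

Section RootTypeElements.

Variables (c : case) (Hc : case_ok c) (eps : signs c) (Hch : chevalley_signs eps).
Variables (a : vec) (aR : a \in Phi c).
Local Notation n := (dimV c).

Lemma lie_mx_conj_adj (S : comPzRingType) (h : 'M[S]_n) :
  elem eps h -> lie_mx eps (h *m emat eps S a *m \adj h).
Proof.
case/(elem_conj_lie_mx Hc Hch) => h' [hh' _ Hconj].
by rewrite (adj_eq_scale_inv hh') -scalemxAr; apply/lie_mxZ/Hconj/lie_mx_emat.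
Qed.

(* adj(h) stands in for h^-1, which is not a polynomial in the entries of h. *)
Definition zconj_adj : 'I_n -> 'I_n -> zpoly n :=
  zmx_mul (zmx_mul (@ZVar n) (zmx_const n (emat eps int a))) (zadj (@ZVar n)).

Lemma zmx_eval_conj_adj (R : pzRingType) (g : 'M[R]_n) :
  zmx_eval zconj_adj g = g *m emat eps R a *m \adj g.
Proof. by rewrite !zmx_eval_mul zmx_eval_adj zmx_eval_const !zmx_eval_var -map_emat. Qed.

Lemma root_type_entry_relation i j k l (z : int) : i != j -> k != l ->
  (forall (S : comPzRingType) (Y : 'M[S]_n), lie_mx eps Y -> Y i j = z%:~R * Y k l) ->
  forall (R : comPzRingType) (g : 'M[R]_n), root_type eps a g -> g i j = z%:~R * g k l.
Proof.
move=> ij kl Hlie R g [_ Hg]; apply/eqP; rewrite -subr_eq0; apply/eqP.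
have -> : g i j - z%:~R * g k l = zeval (zentry_gap i j k l z (@ZVar n)) g.
  by rewrite zeval_entry_gap zmx_eval_var.
apply: Hg => S h h' Gh hh' h'h.
rewrite zeval_entry_gap zmx_eval_var /xroot scale1r mulmxDr mulmx1 mulmxDl hh'.
rewrite entry_gapD entry_gap1 // add0r (inv_eq_scale_adj hh' h'h) -scalemxAr entry_gapZ.
(* h lies in G(S), the closure of E(Phi, -): it suffices to check the relation on E(Phi, -). *)
suff -> : entry_gap i j k l z (h *m emat eps S a *m \adj h) = 0 by rewrite mulr0.
rewrite -zmx_eval_conj_adj -zeval_entry_gap; apply: Gh.2 => S0 h0 Hh0.
rewrite zeval_entry_gap zmx_eval_conj_adj /entry_gap Hlie ?subrr //.
exact: lie_mx_conj_adj.
Qed.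

Lemma root_type_entry_eq0 i j : i != j ->
  (forall (S : comPzRingType) (Y : 'M[S]_n), lie_mx eps Y -> Y i j = 0) ->
  forall (R : comPzRingType) (g : 'M[R]_n), root_type eps a g -> g i j = 0.
Proof.
move=> ij Hlie R g Hg; rewrite -(mul0r (g i j)) -(mulr0z 1).
by apply: (root_type_entry_relation ij ij) Hg => S Y HY; rewrite Hlie // mulr0.
Qed.

End RootTypeElements.

Section LieEntries.

Variables (c : case) (Hc : case_ok c) (eps : signs c) (S : comPzRingType).
Implicit Types (i j : 'I_(dimV c)) (Y : 'M[S]_(dimV c)).

Lemma emat_sum_entry (cf : vec -> S) i j :
  (\sum_(a <- undup (Phi c)) cf a *: emat eps S a) i j =
  if vsub (wt i) (wt j) \in Phi c
  then (if eps (vsub (wt i) (wt j)) j then 1 else -1) * cf (vsub (wt i) (wt j)) else 0.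
Proof.
set b := vsub (wt i) (wt j); set sgn := fun a => if eps a j then 1 else -1 : S.
rewrite summxE big_seq (eq_bigr (fun a => if b == a then sgn a * cf a else 0)) -?big_seq; last first.
  move=> a; rewrite mem_undup => aR; rewrite !mxE (wt_shift_eqE Hc _ _ aR).
  by case: eqP; rewrite ?mulr0 // mulrC.
case: ifPn => bR.
  rewrite (bigD1_seq b) ?mem_undup ?undup_uniq //= eqxx big1 ?addr0 // => a /negbTE.
  by rewrite eq_sym => ->.
rewrite big1_seq // => a /andP[_]; rewrite mem_undup => aR.
by case: eqP => // ba; move: bR; rewrite ba aR.
Qed.

Lemma lie_mx_entry_nonroot Y i j : lie_mx eps Y -> i != j ->
  vsub (wt i) (wt j) \notin Phi c -> Y i j = 0.
Proof.
move=> [cf [d [_ ->]]] ij bR.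
by rewrite mxE emat_sum_entry (negbTE bR) mxE (negbTE ij) add0r.
Qed.

Lemma lie_mx_entry_root Y : lie_mx eps Y -> exists cf : vec -> S, forall i j,
  vsub (wt i) (wt j) \in Phi c ->
  Y i j = (if eps (vsub (wt i) (wt j)) j then 1 else -1) * cf (vsub (wt i) (wt j)).
Proof.
move=> [cf [d [_ ->]]]; exists cf => i j bR.
have ij : i != j by apply: contraTneq bR => ->; rewrite vsub_wt_self.
by rewrite mxE emat_sum_entry bR mxE (negbTE ij) addr0.
Qed.

Definition edge_sign (i j k l : 'I_(dimV c)) : bool :=
  let b := vsub (wt i) (wt j) in eps b j == eps b l.

Lemma lie_mx_entry_same_root Y i j k l : lie_mx eps Y -> vsub (wt i) (wt j) \in Phi c ->
  vsub (wt i) (wt j) = vsub (wt k) (wt l) ->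
  Y i j = (if edge_sign i j k l then 1 else -1 : int)%:~R * Y k l.
Proof.
move=> HY bR Heq; have [cf Hcf] := lie_mx_entry_root HY.
rewrite (Hcf _ _ bR) Hcf -Heq // /edge_sign.
by case: (eps _ j); case: (eps _ l); rewrite /= ?rmorphN1 ?mul1r ?mulN1r ?opprK.
Qed.

End LieEntries.

Section WeightDistance.

Variable c : case.
Implicit Types i j : 'I_(dimV c).

Lemma wdist_neq i j : (0 < wdist i j)%N -> i != j.
Proof.
move=> d0; have n_gt0 : (0 < dimV c)%N by apply: leq_ltn_trans (ltn_ord i).
by have := before_find 0 d0; rewrite nth_iota //= => /negbT.
Qed.

Lemma wdist1_adj i j : wdist i j = 1%N -> wadj i j.
Proof.
move=> d1; have ij : i != j by apply: wdist_neq; rewrite d1.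
have n_gt1 : (1 < dimV c)%N.
  case: ltnP => // n_le1; case/eqP: ij; apply/val_inj => /=.
  by have := ltn_ord i; have := ltn_ord j; move: n_le1; lia.
have : has (fun k => within k i j) (iota 0 (dimV c)) by rewrite has_find -/(wdist i j) d1 size_iota.
move/(nth_find 0); rewrite -/(wdist i j) d1 nth_iota //= (negbTE ij) /=.
by case/existsP => m /andP[/eqP <-].
Qed.

Lemma wdist_ge2_nadj i j : (2 <= wdist i j)%N -> ~~ wadj i j.
Proof.
move=> d2; have n_gt1 : (1 < dimV c)%N.
  by apply: leq_trans d2 _; rewrite -[X in (_ <= X)%N](size_iota 0) find_size.
have := before_find 0 d2; rewrite nth_iota //= => /negbT; rewrite negb_or => /andP[_].
by apply: contra => Hij; apply/existsP; exists i; rewrite eqxx.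
Qed.

End WeightDistance.

Unset Implicit Arguments.
Set Strict Implicit.

Theorem mainTheorem15 (c : case) (eps : signs c) (a : vec) :
  case_ok c -> chevalley_signs eps -> a \in Phi c ->
  (forall (R : comPzRingType) (g : 'M[R]_(dimV c)), root_type eps a g ->
     forall lam mu : 'I_(dimV c), (2 <= wdist lam mu)%N -> g lam mu = 0)
  /\
  (exists s : 'I_(dimV c) -> 'I_(dimV c) -> 'I_(dimV c) -> 'I_(dimV c) -> bool,
     forall (R : comPzRingType) (g : 'M[R]_(dimV c)), root_type eps a g ->
     forall lam mu rho tau : 'I_(dimV c),
       wdist lam mu = 1%N -> wdist rho tau = 1%N ->
       vsub (wt lam) (wt mu) = vsub (wt rho) (wt tau) ->
       g lam mu = (if s lam mu rho tau then 1 else -1) * g rho tau).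
Proof.
move=> Hc Hch aR; split.
  move=> R g Hg lam mu d2.
  have ne : lam != mu by apply: wdist_neq; apply: leq_trans d2.
  apply: (root_type_entry_eq0 Hc Hch aR ne) Hg => S Y HY.
  by apply: (lie_mx_entry_nonroot Hc HY ne); apply: wdist_ge2_nadj.
exists (edge_sign eps) => R g Hg lam mu rho tau d1 d2 Heq.
have ne1 : lam != mu by apply: wdist_neq; rewrite d1.
have ne2 : rho != tau by apply: wdist_neq; rewrite d2.
have -> : (if edge_sign eps lam mu rho tau then 1 else -1 : R) =
          (if edge_sign eps lam mu rho tau then 1 else -1 : int)%:~R.
  by case: edge_sign; rewrite ?rmorphN1.
apply: (root_type_entry_relation Hc Hch aR ne1 ne2) Hg => S Y HY.
by apply: (lie_mx_entry_same_root Hc HY) => //; apply: wdist1_adj.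
Qed.
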